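(* Let $\mathrm{X} \coloneqq \{\lambda_1, \dots, \lambda_L\}$, $\mathrm{X}_1 \coloneqq \{\lambda_2, \dots, \lambda_L\}$ and $\mathrm{X}_1^0 \coloneqq \{\lambda_0, \lambda_2, \dots, \lambda_L\}$. The functions $\mathcal{Z}$ and $\mathcal{H}$ are related through the equation \[ \Omega_0 \; \mathcal{Z}(\mathrm{X}) + \Omega_1 \; \mathcal{Z}(\mathrm{X}_1^0) = \Upsilon_0 \; \mathcal{H} (\mathrm{X}_1 \mid \lambda_0 , \lambda_1 ) + \Upsilon_1 \; \mathcal{H} (\mathrm{X}_1 \mid \lambda_1 , \lambda_0 ) \] with coefficients \begin{align*} \Omega_0 &\coloneqq \frac{a(\lambda_1 - \lambda_0)}{d_{3,3}(\lambda_1 - \lambda_0)} \Lambda (\lambda_0), &\Omega_1 &\coloneqq \left[ \frac{d_{1,2}(\lambda_1 - \lambda_0)}{d_{3,2}(\lambda_1 - \lambda_0)} - \frac{d_{1,3}(\lambda_1 - \lambda_0)}{d_{3,3}(\lambda_1 - \lambda_0)} \right] \Lambda (\lambda_1), \\ \Upsilon_0 &\coloneqq \frac{a(\lambda_1 - \lambda_0)}{d_{3,2}(\lambda_1 - \lambda_0)} \omega(\lambda_0), &\Upsilon_1 &\coloneqq \left[ \frac{d_{2,3}(\lambda_1 - \lambda_0)}{d_{3,3}(\lambda_1 - \lambda_0)} - \frac{d_{2,2}(\lambda_1 - \lambda_0)}{d_{3,2}(\lambda_1 - \lambda_0)} \right] \omega(\lambda_1). \end{align*}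
   Context: Setting: the Izergin–Korepin (IK) and Fateev–Zamolodchikov (FZ) nineteen-vertex models. With $x = e^{2\lambda}$, $q = e^{\gamma}$ and $\zeta = q$ (FZ) or $\zeta = -q^3$ (IK), the statistical weights are $a(\lambda) = (x-\zeta)(x-q^2)$, $b(\lambda) = q(x-1)(x-\zeta)$, $c(\lambda) = (1-q^2)(x-\zeta)$, $\bar c(\lambda) = x(1-q^2)(x-\zeta)$, and, with $\beta' \coloneqq 4-\beta$, $d_{\alpha,\beta}(\lambda) = q(x-1)(x-\zeta) + x(q^2-1)(\zeta-1)$ if $\alpha=\beta=\beta'$; $(x-1)[(x-\zeta)+x(q^2-1)]$ if $\alpha=\beta\neq\beta'$; $(q^2-1)[\zeta(x-1)q^{(\alpha-\beta)/2} - \delta_{\alpha\beta'}(x-\zeta)]$ if $\alpha<\beta$; $x(q^2-1)[(x-1)q^{(\alpha-\beta)/2} - \delta_{\alpha\beta'}(x-\zeta)]$ if $\alpha>\beta$. These form a $9\times 9$ $\mathcal{R}$-matrix $\mathcal{R}(\lambda)$ on $\mathbb{C}^3\otimes\mathbb{C}^3$ solving the Yang–Baxter equation. The monodromy matrix is $\mathcal{T}(\lambda) = \mathcal{R}_{a1}(\lambda-\mu_1)\cdots\mathcal{R}_{aL}(\lambda-\mu_L)$ (inhomogeneities $\mu_j$), a $3\times3$ matrix in auxiliary space whose $(1,1)$, $(1,2)$, $(1,3)$ entries are denoted $\mathcal{A}(\lambda)$, $\mathcal{B}(\lambda)$, $\mathcal{E}(\lambda)$. Let $\ket{0} = e_1^{\otimes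 L}$, $\bra{\bar 0} = (e_3^{\otimes L})^{T}$. Partition functions (domain-wall type boundaries): $\mathcal{Z}(\lambda_1,\dots,\lambda_L) = \bra{\bar 0}\mathcal{E}(\lambda_L)\cdots\mathcal{E}(\lambda_1)\ket{0}$ (symmetric in its arguments), and $\mathcal{F}(u_1,\dots,u_{L-1}\mid v_1,v_2) = \bra{\bar 0}\mathcal{E}(u_{L-1})\cdots\mathcal{E}(u_1)\mathcal{B}(v_2)\mathcal{B}(v_1)\ket{0}$ (symmetric in the $u_i$). Define $\omega(\lambda) \coloneqq \prod_{j=1}^L (e^{2\lambda} - e^{2\mu_j}\zeta)$ and $\mathcal{H}$ by $\mathcal{F}(u_1,\dots,u_{L-1}\mid v_1,v_2) = \omega(v_1)\,\mathcal{H}(u_1,\dots,u_{L-1}\mid v_1,v_2)$ ($\mathcal{F}$ vanishes at the zeros of $\omega(v_1)$). Also $\Lambda(\lambda) \coloneqq \prod_{j=1}^L a(\lambda-\mu_j)$. A set of variables as argument denotes the corresponding (symmetric) arguments. *)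

(* Izergin-Korepin / Fateev-Zamolodchikov 19-vertex models. *)
From HB Require Import structures.
From mathcomp Require Import all_boot all_order all_algebra.
Set Implicit Arguments. Unset Strict Implicit. Unset Printing Implicit Defensive.
Import Order.TTheory GRing.Theory Num.Theory.
Local Open Scope ring_scope.

(* Multiplicative parametrization:
     s        = e^{gamma/2}   (so q = e^gamma = s^2 and q^{k/2} = s^k),
     x        = e^{2 lambda}  for a spectral parameter lambda,
     y j      = e^{2 mu_j}    for the inhomogeneities.
   A weight w(lambda - mu) is then w evaluated at x / y. *)

Inductive model := FZ | IK.

Section NineteenVertex.
Variable K : fieldType.
Variable m : model.
Variable s : K.

Definition qpar : K := s ^+ 2.

Definition zeta : K :=
  match m with FZ => qpar | IK => - qpar ^+ 3 end.

Definition wa (x : K) : K := (x - zeta) * (x - qpar ^+ 2).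
Definition wb (x : K) : K := qpar * (x - 1) * (x - zeta).
Definition wc (x : K) : K := (1 - qpar ^+ 2) * (x - zeta).
Definition wcb (x : K) : K := x * (1 - qpar ^+ 2) * (x - zeta).

(* d_{alpha,beta}, alpha beta in {1,2,3}; q^{(alpha-beta)/2} = s^(alpha-beta) *)
Definition wd (al be : nat) (x : K) : K :=
  let bp := (4 - be)%N in
  let delta : K := (al == bp)%:R in
  let pw : K := s ^ (al%:Z - be%:Z) in
  if (al == be) && (al == bp) then
    qpar * (x - 1) * (x - zeta) + x * (qpar ^+ 2 - 1) * (zeta - 1)
  else if al == be then
    (x - 1) * ((x - zeta) + x * (qpar ^+ 2 - 1))
  else if (al < be)%N then
    (qpar ^+ 2 - 1) * (zeta * (x - 1) * pw - delta * (x - zeta))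
  else
    x * (qpar ^+ 2 - 1) * ((x - 1) * pw - delta * (x - zeta)).

(* Entry <e_i (x) e_k | R(x) | e_j (x) e_l> of the 9x9 R-matrix on C^3 (x) C^3,
   indices i k j l in {1,2,3} (first factor = auxiliary space). *)
Definition Rent (x : K) (i k j l : nat) : K :=
  if (i + k == 4)%N then (if (j + l == 4)%N then wd i j x else 0)
  else if i == k then (if (j == i) && (l == i) then wa x else 0)
  else if (j == i) && (l == k) then wb x
  else if (j == k) && (l == i) then (if (i < k)%N then wc x else wcb x)
  else 0.

Variable L : nat.
Variable y : 'I_L -> K.

(* basis states of the quantum space (C^3)^{(x) L}: e_{st 0 + 1} (x) ... *)
Definition state := {ffun 'I_L -> 'I_3}.

(* For fixed quantum basis states (out, in), the 3x3 auxiliary matrix of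
   site j: entry (c0, c1) = <e_c0 (x) e_out_j | R_{aj}(lambda - mu_j) | e_c1 (x) e_in_j> *)
Definition site_mx (x : K) (so si : state) (j : 'I_L) : 'M[K]_3 :=
  \matrix_(c0 < 3, c1 < 3)
     Rent (x / y j) c0.+1 (so j).+1 c1.+1 (si j).+1.

(* Monodromy matrix T(lambda) = R_{a1} ... R_{aL}; entry (a,b) in auxiliary
   space as an operator on the quantum space, given by its matrix elements
   <out| T_ab(lambda) |in>. *)
Definition Tmono (a b : 'I_3) (x : K) (so si : state) : K :=
  (\prod_(j < L) site_mx x so si j) a b.

Definition opA (x : K) := Tmono 0 0 x.
Definition opB (x : K) := Tmono 0 1 x.
Definition opE (x : K) := Tmono 0 2 x.

Definition op_apply (O : state -> state -> K) (v : state -> K) : state -> K :=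
  fun so => \sum_(si : state) O so si * v si.

(* |0> = e_1^{(x) L} *)
Definition vac : state -> K := fun st => (st == [ffun _ => (0 : 'I_3)])%:R.
(* <0bar| = (e_3^{(x) L})^T, as a state index *)
Definition dualvac_state : state := [ffun _ => (2 : 'I_3)].

(* Z(l_1,...,l_k) = <0bar| E(l_k) ... E(l_1) |0>   (E(l_1) acts first) *)
Definition Zpf (ls : seq K) : K :=
  foldl (fun v l => op_apply (opE l) v) vac ls dualvac_state.

(* F(u_1,...,u_k | v1, v2) = <0bar| E(u_k) ... E(u_1) B(v2) B(v1) |0> *)
Definition Fpf (us : seq K) (v1 v2 : K) : K :=
  foldl (fun v l => op_apply (opE l) v)
        (op_apply (opB v2) (op_apply (opB v1) vac)) us dualvac_state.

Definition omega (x : K) : K := \prod_(j < L) (x - y j * zeta).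

Definition Lam (x : K) : K := \prod_(j < L) wa (x / y j).

Definition Hpf (us : seq K) (v1 v2 : K) : K := Fpf us v1 v2 / omega v1.

End NineteenVertex.

From HB Require Import structures.
From mathcomp Require Import all_boot all_order all_algebra.
From mathcomp Require Import mxtens ring zify.
Set Implicit Arguments. Unset Strict Implicit. Unset Printing Implicit Defensive.
Import GRing.Theory.
Local Open Scope ring_scope.

(* The Yang-Baxter equation of the nineteen-vertex R-matrix, checked entry by
   entry, gives the RTT relation
     R(l1 - l0) T(l1) (x) T(l0) = T(l0) (x) T(l1) R(l1 - l0).
   On the reference state |0>, A(l) acts as Lambda(l), and B(l)|0> = 0 whenever
   e^{2l} = e^{2mu_j} zeta, since all of a, b, c, c-bar vanish there.  Two
   entries of the RTT relation applied to |0> then read, with weights at l1 - l0,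
     a Lambda(l0) E(l1)|0> = d13 Lambda(l1) E(l0)|0> + d23 B(l0)B(l1)|0> + d33 A(l0)E(l1)|0>,
     a B(l1)B(l0)|0>       = d12 Lambda(l1) E(l0)|0> + d22 B(l0)B(l1)|0> + d32 A(l0)E(l1)|0>.
   Eliminating A(l0)E(l1)|0> and applying <0bar| E(l_L) ... E(l_2) gives the
   relation between Z and F = omega H. *)

Section BigopsAndTensors.
Variable R : comNzRingType.

Lemma sum_ord3 (F : 'I_3 -> R) : \sum_(i < 3) F i = F 0 + F 1 + F 2.
Proof.
rewrite !big_ord_recl big_ord0 addr0 addrA.
by do 2?congr (_ + _); congr F; apply: val_inj.
Qed.

Lemma sum_mxtens_index (m n : nat) (F : 'I_(m * n) -> R) :
  \sum_(w < m * n) F w = \sum_(a < m) \sum_(b < n) F (mxtens_index (a, b)).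
Proof.
rewrite pair_big (reindex (@mxtens_index m n)) /=; last first.
  by exists (@mxtens_unindex m n) => w _; [exact: mxtens_indexK | exact: mxtens_unindexK].
by apply: eq_bigr => -[a b].
Qed.

Lemma tensmx1 (m n : nat) : (1%:M : 'M[R]_m) *t (1%:M : 'M[R]_n) = 1%:M.
Proof.
apply/matrixP => u v.
case: (mxtens_indexP u) => a b; case: (mxtens_indexP v) => c d.
rewrite tensmxE !mxE (can_eq (@mxtens_indexK m n)) xpair_eqE.
by case: (a == c); case: (b == d); rewrite ?mulr1n ?mulr0n ?mulr1 ?mulr0.
Qed.

Lemma prod_tensmx (I : Type) (r : seq I) (m n : nat)
    (A : I -> 'M[R]_m.+1) (B : I -> 'M[R]_n.+1) :
  \prod_(j <- r) (A j *t B j) = (\prod_(j <- r) A j) *t (\prod_(j <- r) B j)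
  :> 'M_(m.+1 * n.+1).
Proof.
elim: r => [|j r IH]; first by rewrite !big_nil tensmx1.
by rewrite !big_cons IH -tensmx_mul.
Qed.

Lemma prodmx_eigen (n : nat) (I : Type) (r : seq I) (A : I -> 'M[R]_n.+1)
    (c : I -> R) (v : 'cV[R]_n.+1) :
  (forall j, A j *m v = c j *: v) -> (\prod_(j <- r) A j) *m v = (\prod_(j <- r) c j) *: v.
Proof.
move=> Av; elim: r => [|j r IH]; first by rewrite !big_nil mul1mx scale1r.
by rewrite !big_cons -mulmxA IH -scalemxAr Av scalerA mulrC.
Qed.

End BigopsAndTensors.

Lemma prod_mulr_idem_eq0 (R : nzRingType) (I : eqType) (r : seq I) (a : I -> R)
    (e : R) (k : I) :
  e * e = e -> (forall j, a j * e = e * a j * e) -> a k * e = 0 -> k \in r ->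
  (\prod_(j <- r) a j) * e = 0.
Proof.
move=> ee stable ake.
have absorb r' : (\prod_(j <- r') a j) * e = e * ((\prod_(j <- r') a j) * e).
  elim: r' => [|j r' IH]; first by rewrite big_nil mul1r ee.
  by rewrite big_cons -!mulrA IH mulrA stable !mulrA ee.
elim: r => // j r IH /predU1P[<- | kr]; rewrite big_cons -mulrA.
  by rewrite absorb mulrA ake mul0r.
by rewrite IH // mulr0.
Qed.

Lemma exprz_subn (K : fieldType) (s : K) (a b : nat) :
  s != 0 -> s ^ (a%:Z - b%:Z) = s ^+ a / s ^+ b.
Proof. by move=> s_neq0; rewrite expfzDr // exprnN. Qed.

Lemma eliminate_common (K : fieldType) (a e12 e13 e22 e23 e32 e33 l0 l1 u0 u1 v w t : K) :
  e33 != 0 -> e32 != 0 ->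
  a * (l0 * u1) = e13 * (l1 * u0) + e23 * w + e33 * t ->
  a * v = e12 * (l1 * u0) + e22 * w + e32 * t ->
  a / e33 * l0 * u1 + (e12 / e32 - e13 / e33) * l1 * u0
  = a / e32 * v + (e23 / e33 - e22 / e32) * w.
Proof.
move=> e33_neq0 e32_neq0 u1E vE.
have tE : t = (a * (l0 * u1) - e13 * (l1 * u0) - e23 * w) / e33.
  by rewrite u1E; field.
rewrite -[a / e32 * v]mulrAC vE tE; field.
by rewrite e33_neq0 e32_neq0.
Qed.

Section RMatrix.
Variables (K : fieldType) (md : model) (s : K).

Definition Rcoef (x : K) (i k j l : 'I_3) : K := Rent md s x i.+1 k.+1 j.+1 l.+1.

Lemma Rent_charge x (i k j l : nat) : Rent md s x i k j l != 0 -> (i + k = j + l)%N.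
Proof.
rewrite /Rent; case: ifP => [/eqP -> | _].
  by case: ifP => [/eqP -> | _]; rewrite ?eqxx.
case: ifP => [/eqP <- | _].
  by case: ifP => [/andP[/eqP -> /eqP ->] | _]; rewrite ?eqxx.
case: ifP => [/andP[/eqP -> /eqP ->] // | _].
by case: ifP => [/andP[/eqP -> /eqP ->] _ | _]; rewrite ?eqxx // addnC.
Qed.

Definition zeta_div_s : K := match md with FZ => s | IK => - s ^+ 5 end.
Definition zeta_div_s2 : K := match md with FZ => 1 | IK => - s ^+ 4 end.

(* The table of [Rent] with every [q^((alpha-beta)/2)] cleared, so that identities
   between entries become polynomial identities in [s] and the spectral
   parameters. *)
Definition Rpoly (x : K) (i k j l : nat) : K :=
  let q := qpar s in let z := zeta md s in
  match i, k, j, l with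
  | 1, 1, 1, 1 | 3, 3, 3, 3 => wa md s x
  | 1, 2, 1, 2 | 2, 1, 2, 1 | 2, 3, 2, 3 | 3, 2, 3, 2 => wb md s x
  | 1, 2, 2, 1 | 2, 3, 3, 2 => wc md s x
  | 2, 1, 1, 2 | 3, 2, 2, 3 => wcb md s x
  | 1, 3, 1, 3 | 3, 1, 3, 1 => (x - 1) * (x - z + x * (q ^+ 2 - 1))
  | 2, 2, 2, 2 => q * (x - 1) * (x - z) + x * (q ^+ 2 - 1) * (z - 1)
  | 1, 3, 2, 2 | 2, 2, 3, 1 => (q ^+ 2 - 1) * zeta_div_s * (x - 1)
  | 1, 3, 3, 1 => (q ^+ 2 - 1) * (zeta_div_s2 * (x - 1) - (x - z))
  | 2, 2, 1, 3 | 3, 1, 2, 2 => x * (q ^+ 2 - 1) * ((x - 1) * s)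
  | 3, 1, 1, 3 => x * (q ^+ 2 - 1) * ((x - 1) * s ^+ 2 - (x - z))
  | _, _, _, _ => 0
  end.

Definition sum123 (F : nat -> K) : K := F 1%N + F 2%N + F 3%N.

(* The charge hypothesis restricts the brute-force check to 141 of the 729
   index configurations; the others are trivial by [Rent_charge]. *)
Lemma Rpoly_YBE (c b : K) (i k o j l i' : 'I_3) : (i + k + o = j + l + i')%N ->
  sum123 (fun p => sum123 (fun r => sum123 (fun m =>
    Rpoly c i.+1 k.+1 p r * Rpoly (c * b) p o.+1 j.+1 m * Rpoly b r m l.+1 i'.+1)))
  = sum123 (fun p => sum123 (fun r => sum123 (fun m =>
    Rpoly (c * b) i.+1 m p i'.+1 * Rpoly b k.+1 o.+1 r m * Rpoly c p r j.+1 l.+1))).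
Proof.
case: i => [[|[|[|//]]] ?]; case: k => [[|[|[|//]]] ?]; case: o => [[|[|[|//]]] ?];
case: j => [[|[|[|//]]] ?]; case: l => [[|[|[|//]]] ?]; case: i' => [[|[|[|//]]] ?].
all: move=> charge; cbv in charge; try discriminate charge.
all: cbv beta iota zeta delta [sum123 Rpoly nat_of_ord zeta_div_s zeta_div_s2
                               wa wb wc wcb zeta qpar].
all: case: md; cbv beta iota.
all: ring.
Qed.

Hypothesis s_neq0 : s != 0.

Lemma Rcoef_poly x (i k j l : 'I_3) : Rcoef x i k j l = Rpoly x i.+1 k.+1 j.+1 l.+1.
Proof.
case: i => [[|[|[|//]]] ?]; case: k => [[|[|[|//]]] ?];
case: j => [[|[|[|//]]] ?]; case: l => [[|[|[|//]]] ?] => //.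
all: rewrite /Rcoef /Rent /wd /= ?(exprz_subn _ _ s_neq0) //.
all: rewrite /zeta_div_s /zeta_div_s2 /zeta /qpar; case: md; field.
all: exact: s_neq0.
Qed.

Lemma Rcoef_YBE (c b : K) (i k o j l i' : 'I_3) :
  \sum_(p < 3) \sum_(r < 3) \sum_(m < 3)
    Rcoef c i k p r * Rcoef (c * b) p o j m * Rcoef b r m l i'
  = \sum_(p < 3) \sum_(r < 3) \sum_(m < 3)
    Rcoef (c * b) i m p i' * Rcoef b k o r m * Rcoef c p r j l.
Proof.
have [charge|charge] := eqVneq (i + k + o)%N (j + l + i')%N; last first.
  by rewrite !big1 // => p _; rewrite big1 // => r _; rewrite big1 // => m _;
    apply/eqP; apply: contraNT charge; rewrite !mulf_eq0 !negb_or;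
    case/andP=> /andP[/Rent_charge ? /Rent_charge ?] /Rent_charge ?; apply/eqP; lia.
transitivity (sum123 (fun p => sum123 (fun r => sum123 (fun m =>
    Rpoly c i.+1 k.+1 p r * Rpoly (c * b) p o.+1 j.+1 m * Rpoly b r m l.+1 i'.+1)))).
  by rewrite /sum123 !sum_ord3 !Rcoef_poly.
rewrite (Rpoly_YBE _ _ charge).
by rewrite /sum123 !sum_ord3 !Rcoef_poly.
Qed.

End RMatrix.

Section Monodromy.
Variables (K : fieldType) (md : model) (s : K) (L : nat) (y : 'I_L -> K).

Local Notation state := (state L).
Local Notation T := (Tmono md s y).

Definition site (x : K) (j : 'I_L) (o i : 'I_3) : 'M[K]_3 :=
  \matrix_(c0, c1) Rcoef md s (x / y j) c0 o c1 i.

Lemma TmonoE a b x (so si : state) :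
  T a b x so si = (\prod_(j < L) site x j (so j) (si j)) a b.
Proof. by []. Qed.

Definition op_mul (O1 O2 : state -> state -> K) : state -> state -> K :=
  fun so si => \sum_(mid : state) O1 so mid * O2 mid si.

Definition vac_state : state := [ffun=> 0].

Lemma op_apply_vac (O : state -> state -> K) st :
  op_apply O (@vac K L) st = O st vac_state.
Proof.
rewrite /op_apply (bigD1 vac_state) //= big1 => [|si /negbTE si_neq]; last first.
  by rewrite /vac si_neq mulr0.
by rewrite /vac eqxx mulr1 addr0.
Qed.

Lemma op_apply_vac2 (O1 O2 : state -> state -> K) st :
  op_apply O1 (op_apply O2 (@vac K L)) st = op_mul O1 O2 st vac_state.
Proof. by apply: eq_bigr => si _; rewrite op_apply_vac. Qed.

Lemma site_vac_eigen x j o :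
  site x j o 0 *m delta_mx 0 0
  = ((o == 0)%:R * wa md s (x / y j)) *: (delta_mx 0 0 : 'cV[K]_3).
Proof.
rewrite -colE; apply/matrixP => i k; rewrite (ord1 k) !mxE.
case: i => [[|[|[|//]]] ?]; case: o => [[|[|[|//]]] ?];
by rewrite /Rcoef /Rent /= ?(mulr1, mulr0, mul1r, mul0r).
Qed.

Lemma prod_indicator_vac (st : state) :
  \prod_(j < L) (st j == 0)%:R = (st == vac_state)%:R :> K.
Proof.
have [->|st_neq] := eqVneq st vac_state.
  by rewrite big1 // => j _; rewrite ffunE eqxx.
have [j stj] : exists j, st j != 0.
  apply/existsP; apply: contraNT st_neq; rewrite negb_exists => /forallP st0.
  by apply/eqP/ffunP => j; rewrite ffunE; apply/eqP/negbNE/st0.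
by rewrite (bigD1 j) //= (negbTE stj) mul0r.
Qed.

Lemma Tmono_A_vac x (st : state) :
  T 0 0 x st vac_state = (st == vac_state)%:R * Lam md s y x.
Proof.
have col0 (A : 'M[K]_3) : A 0 0 = (A *m (delta_mx 0 0 : 'cV_3)) 0 0.
  by rewrite -colE mxE.
rewrite TmonoE (eq_bigr (fun j => site x j (st j) 0)) => [|j _]; last by rewrite ffunE.
rewrite col0 (prodmx_eigen _ (fun j => site_vac_eigen x j (st j))) !mxE eqxx mulr1.
by rewrite big_split /= prod_indicator_vac.
Qed.

Lemma op_mul_A_vac (O : state -> state -> K) x st :
  op_mul O (T 0 0 x) st vac_state = Lam md s y x * O st vac_state.
Proof.
rewrite /op_mul (bigD1 vac_state) //= big1 => [|mid /negbTE mid_neq]; last first.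
  by rewrite Tmono_A_vac mid_neq mul0r mulr0.
by rewrite Tmono_A_vac eqxx mul1r addr0 mulrC.
Qed.

Lemma site_vac_block x j o :
  site x j o 0 *m (pid_mx 2 : 'M_3) = pid_mx 2 *m site x j o 0 *m pid_mx 2.
Proof.
apply/matrixP => a b; rewrite !mxE !sum_ord3 !mxE !sum_ord3 !mxE.
case: a => [[|[|[|//]]] ?]; case: b => [[|[|[|//]]] ?]; case: o => [[|[|[|//]]] ?];
rewrite /Rcoef /Rent /=; ring.
Qed.

Lemma site_vac_zeta x j o :
  x / y j = zeta md s -> site x j o 0 *m (pid_mx 2 : 'M_3) = 0.
Proof.
move=> xj; apply/matrixP => a b; rewrite !mxE !sum_ord3 !mxE xj.
case: a => [[|[|[|//]]] ?]; case: b => [[|[|[|//]]] ?]; case: o => [[|[|[|//]]] ?];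
rewrite /Rcoef /Rent /wa /wb /wc /wcb /= ?subrr; ring.
Qed.

(* [pid_mx 2] projects onto the first two auxiliary basis vectors: the site
   matrices acting on the vacuum preserve their span, and the one at site [k]
   annihilates it. *)
Lemma Tmono_B_vac_eq0 x k (st : state) :
  x / y k = zeta md s -> T 0 1 x st vac_state = 0.
Proof.
move=> xk.
have col1 (A : 'M[K]_3) : A 0 1 = (A *m (pid_mx 2 : 'M_3)) 0 1.
  by rewrite mxE sum_ord3 !mxE /= ?(mulr0, mulr1, addr0, add0r).
rewrite TmonoE (eq_bigr (fun j => site x j (st j) 0)) => [|j _]; last by rewrite ffunE.
rewrite col1 mulmxE (@prod_mulr_idem_eq0 _ _ _ _ _ k) ?mxE ?mem_index_enum //.
- exact: pid_mx_id.
- by move=> j; rewrite -!mulmxE site_vac_block.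
- by rewrite -mulmxE site_vac_zeta.
Qed.

Section OperatorString.
Variable O : K -> state -> state -> K.
Local Notation act := (fun v l => op_apply (O l) v).

Lemma foldl_op_apply_eq0 us (v : state -> K) :
  (forall st, v st = 0) -> forall st, foldl act v us st = 0.
Proof.
elim: us v => [|l us IH] v v0 st /=; first exact: v0.
by apply: IH => st'; rewrite /op_apply big1 // => si _; rewrite v0 mulr0.
Qed.

Lemma foldl_op_apply_lin us (v1 v2 w1 w2 : state -> K) (a1 a2 b1 b2 : K) :
  (forall st, a1 * v1 st + a2 * v2 st = b1 * w1 st + b2 * w2 st) ->
  forall st, a1 * foldl act v1 us st + a2 * foldl act v2 us st
             = b1 * foldl act w1 us st + b2 * foldl act w2 us st.
Proof.
elim: us v1 v2 w1 w2 => [|l us IH] v1 v2 w1 w2 vw st /=; first exact: vw.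
apply: IH => st'; rewrite /op_apply !mulr_sumr -!big_split /=.
by apply: eq_bigr => si _; rewrite !(mulrCA _ (O l st' si)) -!mulrDr vw.
Qed.

End OperatorString.

Hypotheses (s_neq0 : s != 0) (y_neq0 : forall j, y j != 0).

Definition Rmx (x : K) : 'M[K]_(3 * 3) :=
  \matrix_(u, v) Rcoef md s x (mxtens_unindex u).1 (mxtens_unindex u).2
                              (mxtens_unindex v).1 (mxtens_unindex v).2.

Lemma RmxE x a b c d :
  Rmx x (mxtens_index (a, b)) (mxtens_index (c, d)) = Rcoef md s x a b c d.
Proof. by rewrite mxE !mxtens_indexK. Qed.

(* The factor at site [j], between quantum states [o] and [i], of T(x) (x) T(x')
   (resp. of T(x') (x) T(x), with its auxiliary tensor factors swapped back). *)
Definition site_pair x x' j (o i : 'I_3) : 'M[K]_(3 * 3) :=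
  \sum_(m < 3) site x j o m *t site x' j m i.

Definition site_pair_rev x x' j (o i : 'I_3) : 'M[K]_(3 * 3) :=
  \sum_(m < 3) site x j m i *t site x' j o m.

Lemma Rmx_site_pair x x' j o i : x' != 0 ->
  Rmx (x / x') *m site_pair x x' j o i = site_pair_rev x x' j o i *m Rmx (x / x').
Proof.
move=> x'_neq0.
have xyE : x / y j = x / x' * (x' / y j) by field; rewrite x'_neq0 y_neq0.
apply/matrixP => u v.
case: (mxtens_indexP u) => i1 k1; case: (mxtens_indexP v) => j1 l1.
rewrite !mxE !sum_mxtens_index.
transitivity (\sum_(p < 3) \sum_(r < 3) \sum_(m < 3)
    Rcoef md s (x / x') i1 k1 p r * Rcoef md s (x / x' * (x' / y j)) p o j1 m
    * Rcoef md s (x' / y j) r m l1 i).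
  apply: eq_bigr => p _; apply: eq_bigr => r _.
  rewrite RmxE /site_pair summxE mulr_sumr; apply: eq_bigr => m _.
  by rewrite tensmxE !mxE -xyE mulrA.
rewrite Rcoef_YBE //; apply: eq_bigr => p _; apply: eq_bigr => r _.
rewrite RmxE /site_pair_rev summxE mulr_suml; apply: eq_bigr => m _.
by rewrite tensmxE !mxE -xyE.
Qed.

Lemma Rmx_prod_site_pair x x' (so si : state) : x' != 0 ->
  Rmx (x / x') *m \prod_(j < L) site_pair x x' j (so j) (si j)
  = \prod_(j < L) site_pair_rev x x' j (so j) (si j) *m Rmx (x / x').
Proof.
move=> x'_neq0.
apply: (big_ind2 (fun A B => Rmx (x / x') *m A = B *m Rmx (x / x'))).
- by rewrite mulmx1 mul1mx.
- by move=> A1 B1 A2 B2 h1 h2; rewrite -!mulmxE mulmxA h1 -mulmxA h2 mulmxA.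
- by move=> j _; apply: Rmx_site_pair.
Qed.

Lemma prod_site_pairE x x' a b c d (so si : state) :
  (\prod_(j < L) site_pair x x' j (so j) (si j))
    (mxtens_index (a, c)) (mxtens_index (b, d))
  = op_mul (T a b x) (T c d x') so si.
Proof.
rewrite /site_pair bigA_distr_bigA /= summxE; apply: eq_bigr => mid _.
by rewrite prod_tensmx tensmxE.
Qed.

Lemma prod_site_pair_revE x x' a b c d (so si : state) :
  (\prod_(j < L) site_pair_rev x x' j (so j) (si j))
    (mxtens_index (c, a)) (mxtens_index (d, b))
  = op_mul (T a b x') (T c d x) so si.
Proof.
rewrite /site_pair_rev bigA_distr_bigA /= summxE; apply: eq_bigr => mid _.
by rewrite prod_tensmx tensmxE mulrC.
Qed.

Lemma RTT x x' (i k j l : 'I_3) (so si : state) : x' != 0 ->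
  \sum_(p < 3) \sum_(r < 3)
     Rcoef md s (x / x') i k p r * op_mul (T p j x) (T r l x') so si
  = \sum_(p < 3) \sum_(r < 3)
     op_mul (T k r x') (T i p x) so si * Rcoef md s (x / x') p r j l.
Proof.
move=> x'_neq0.
transitivity ((Rmx (x / x') *m \prod_(j < L) site_pair x x' j (so j) (si j))
                (mxtens_index (i, k)) (mxtens_index (j, l))).
  rewrite mxE sum_mxtens_index; apply: eq_bigr => p _; apply: eq_bigr => r _.
  by rewrite RmxE prod_site_pairE.
rewrite Rmx_prod_site_pair // mxE sum_mxtens_index.
apply: eq_bigr => p _; apply: eq_bigr => r _.
by rewrite RmxE prod_site_pair_revE.
Qed.

Section Exchange.
Variables (x x' : K) (st : state).
Hypothesis x'_neq0 : x' != 0.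
Local Notation r := (x / x').

Lemma E_vac_exchange :
  wa md s r * (Lam md s y x' * T 0 2 x st vac_state)
  = wd md s 1 3 r * (Lam md s y x * T 0 2 x' st vac_state)
  + wd md s 2 3 r * op_mul (T 0 1 x') (T 0 1 x) st vac_state
  + wd md s 3 3 r * op_mul (T 0 0 x') (T 0 2 x) st vac_state.
Proof.
have := RTT x 0 0 2 0 st vac_state x'_neq0.
rewrite !sum_ord3 /Rcoef /Rent /= !(mul0r, mulr0, add0r, addr0) !op_mul_A_vac => ->.
ring.
Qed.

Lemma BB_vac_exchange :
  wa md s r * op_mul (T 0 1 x) (T 0 1 x') st vac_state
  = wd md s 1 2 r * (Lam md s y x * T 0 2 x' st vac_state)
  + wd md s 2 2 r * op_mul (T 0 1 x') (T 0 1 x) st vac_state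
  + wd md s 3 2 r * op_mul (T 0 0 x') (T 0 2 x) st vac_state.
Proof.
have := RTT x 0 0 1 1 st vac_state x'_neq0.
rewrite !sum_ord3 /Rcoef /Rent /= !(mul0r, mulr0, add0r, addr0) !op_mul_A_vac => ->.
ring.
Qed.

End Exchange.

Lemma Fpf_eq0 us v1 v2 : omega md s y v1 = 0 -> Fpf md s y us v1 v2 = 0.
Proof.
move/eqP; rewrite /omega prodf_seq_eq0 => /hasP[k _ /=].
rewrite subr_eq0 => /eqP v1E.
have v1k : v1 / y k = zeta md s by rewrite v1E mulrC mulKf.
apply: foldl_op_apply_eq0 => st; rewrite op_apply_vac2 /op_mul /opB big1 // => mid _.
by rewrite (Tmono_B_vac_eq0 _ v1k) mulr0.
Qed.

(* Holds also where [omega v1 = 0]: there [Hpf] is the junk value [Fpf / 0 = 0]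
   and [Fpf] vanishes. *)
Lemma omega_mul_Hpf us v1 v2 :
  omega md s y v1 * Hpf md s y us v1 v2 = Fpf md s y us v1 v2.
Proof.
have [omega0|omega_neq0] := eqVneq (omega md s y v1) 0.
  by rewrite omega0 mul0r Fpf_eq0.
by rewrite mulrC divfK.
Qed.

End Monodromy.

(* x0, x1 = e^{2 lambda_0}, e^{2 lambda_1};  xr = [e^{2 lambda_2}; ...; e^{2 lambda_L}];
   L = n.+1;  y j = e^{2 mu_{j+1}};  s = e^{gamma/2}.
   The argument lambda_1 - lambda_0 of the weights corresponds to x1 / x0. *)
Theorem lemma4p1 (K : fieldType) (m : model) (s : K) (n : nat)
    (y : 'I_n.+1 -> K) (x0 x1 : K) (xr : seq K) :
  s != 0 -> (forall j, y j != 0) ->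
  x0 != 0 -> x1 != 0 -> all (fun x => x != 0) xr ->
  size xr = n ->
  wd m s 3 3 (x1 / x0) != 0 -> wd m s 3 2 (x1 / x0) != 0 ->
  let r := x1 / x0 in
  let Omega0 := wa m s r / wd m s 3 3 r * Lam m s y x0 in
  let Omega1 := (wd m s 1 2 r / wd m s 3 2 r - wd m s 1 3 r / wd m s 3 3 r)
                * Lam m s y x1 in
  let Upsilon0 := wa m s r / wd m s 3 2 r * omega m s y x0 in
  let Upsilon1 := (wd m s 2 3 r / wd m s 3 3 r - wd m s 2 2 r / wd m s 3 2 r)
                  * omega m s y x1 in
  Omega0 * Zpf m s y (x1 :: xr) + Omega1 * Zpf m s y (x0 :: xr)
  = Upsilon0 * Hpf m s y xr x0 x1 + Upsilon1 * Hpf m s y xr x1 x0.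
Proof.
move=> s_neq0 y_neq0 x0_neq0 _ _ _ d33_neq0 d32_neq0 r Omega0 Omega1 Upsilon0 Upsilon1.
rewrite /Upsilon0 /Upsilon1 -(mulrA _ (omega m s y x0)) -(mulrA _ (omega m s y x1)).
rewrite !omega_mul_Hpf //.
apply: (foldl_op_apply_lin (opE m s y) xr) => st.
rewrite /Omega0 /Omega1 !op_apply_vac !op_apply_vac2.
apply: eliminate_common d33_neq0 d32_neq0 _ _.
- exact: E_vac_exchange.
- exact: BB_vac_exchange.
Qed.
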